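(* In the setting of the context, assume $G_{xy}^{[1]}=1$, $G_x/G_x^{[1]}\cong S_5$ and $G_x^{[1]}\cong A_4$. Then $G_x\cong S_5\boxtimes S_4$.
   Context: $\mathcal{A}=(G_x,G_e,G_{xy})$ is a finite, primitive amalgam of degree $(5,2)$ (no nontrivial subgroup of $G_{xy}$ normal in both $G_x$ and $G_e$; $|G_x:G_{xy}|=5$, $|G_e:G_{xy}|=2$), $G=G_x*_{G_{xy}}G_e$ acts on the coset graph (5-valent tree) $\Gamma$, $x$ is the vertex with stabiliser $G_x$, $y$ the neighbour with $G_e$ the setwise stabiliser of $\{x,y\}$ and $G_x\cap G_y=G_{xy}$. $G_z^{[1]}$ is the pointwise stabiliser of $z$ and its neighbours, $G_{xy}^{[1]}=G_x^{[1]}\cap G_y^{[1]}$. $S_n\boxtimes S_m=\{(g,h)\in S_n\times S_m:\operatorname{sgn}g=\operatorname{sgn}h\}$, the index-2 subgroup of $S_n\times S_m$ with no direct factor isomorphic to $S_n$ or $S_m$. *)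

From mathcomp Require Import all_boot all_fingroup all_solvable.
Set Implicit Arguments. Unset Strict Implicit. Unset Printing Implicit Defensive.
Local Open Scope group_scope.

(* An amalgam (G_x, G_e, G_xy) is represented inside an ambient finite group
   gT, with G_xy := G_x :&: G_e. *)

(* G_x^{[1]} : kernel of the action of G_x on the neighbours of x, which are
   the cosets G_x/G_xy; i.e. the core of G_xy in G_x. *)
Definition vstab1 (gT : finGroupType) (Gx Ge : {set gT}) : {set gT} :=
  gcore (Gx :&: Ge) Gx.

(* G_y = G_x^t for t in G_e \ G_xy, so G_y^{[1]} = (G_x^{[1]})^t and
   G_xy^{[1]} = G_x^{[1]} :&: G_y^{[1]}. *)
Definition estab1 (gT : finGroupType) (Gx Ge : {set gT}) : {set gT} :=
  vstab1 Gx Ge :&: (vstab1 Gx Ge) :^ repr (Ge :\: (Gx :&: Ge)).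

Definition primitive_amalgam (gT : finGroupType) (Gx Ge : {set gT}) : Prop :=
  forall K : {group gT}, K \subset Gx :&: Ge -> K <| Gx -> K <| Ge -> K = 1 :> {set gT}.

Definition boxtimes (n m : nat) : {set ({perm 'I_n} * {perm 'I_m})} :=
  [set p | odd_perm p.1 == odd_perm p.2].

From mathcomp Require Import all_boot all_fingroup all_solvable.
From mathcomp Require Import zify.
Set Implicit Arguments. Unset Strict Implicit. Unset Printing Implicit Defensive.
Local Open Scope group_scope.

(* G_x has two permutation representations: pi, on the five neighbours of x
   (the cosets of G_xy), with kernel K; and rho, by conjugation on the four
   Sylow 3-subgroups of K ≅ A_4, which restricts to the isomorphism K ≅ A_4.
   Put N := ker rho, so N ∩ K = 1.  If rho were not onto S_4, then
   G_x = N × K with N ≅ S_5; writing L := K^t = G_y^{[1]} for t ∈ G_e \ G_xy,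
   the hypothesis K ∩ L = 1 forces L into M := C_{G_xy}(K) = N ∩ G_xy ≅ S_4,
   and D := C_M(L) then has order 2, so it is central in M; but pi maps M onto
   a point stabiliser of S_5, whose centraliser in S_5 is trivial, so D ≤ K ∩ N
   = 1, a contradiction.  Hence rho is onto, |N| = 60, pi(N) = A_5 and
   pi^{-1}(A_5) = N K = rho^{-1}(A_4): pi and rho agree on parities, and
   g ↦ (pi g, rho g) is an isomorphism of G_x onto S_5 ⊠ S_4 (both of order
   1440). *)

Section Alt4.

Local Notation A4 := 'Alt_('I_4).

Lemma card_Alt4 : #|A4| = 12.
Proof. by apply: double_inj; rewrite -mul2n card_Alt card_ord. Qed.

Lemma card_Sym4 : #|[set: {perm 'I_4}]| = 24.
Proof. by have := card_Sym 'I_4; rewrite card_ord. Qed.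

(* The point stabilisers of A_4; they turn out to be its Sylow 3-subgroups. *)
Definition stab4 (i : 'I_4) : {group {perm 'I_4}} := 'C_A4[i | 'P]%G.

Lemma two_others (i j : 'I_4) : i != j ->
  exists k l : 'I_4, [/\ k != l, k != i, k != j, l != i & l != j].
Proof.
move=> ij; have: #|~: [set i; j]| == 2.
  have := cardsC [set i; j]; rewrite cards2 ij [in RHS]card_ord => /= E.
  by apply/eqP; move: E; lia.
case/cards2P=> k [l [kl E]]; exists k, l.
have: k \in ~: [set i; j] by rewrite E !inE eqxx.
have: l \in ~: [set i; j] by rewrite E !inE eqxx orbT.
by rewrite !inE !negb_or => /andP[li lj] /andP[ki kj].
Qed.

(* The stabiliser of i in A_4 fixes no other point: for j <> i the 3-cycle
   (j k l) on the remaining points lies in it. *)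
Lemma stab4_fix (i j : 'I_4) : (forall a, a \in stab4 i -> a j = j) -> j = i.
Proof.
move=> fixj; apply/eqP/negPn/negP; rewrite eq_sym => ij.
have [k [l [kl ki kj li lj]]] := two_others ij.
pose c := tperm j k * tperm j l.
have: c \in stab4 i.
  rewrite inE Alt_even odd_permM !odd_tperm eq_sym kj eq_sym lj /=.
  by apply/astab1P; rewrite /= /aperm /c permM !tpermD // eq_sym.
move/fixj; rewrite /c permM tpermL tpermD ?(eq_sym l) //; last by rewrite eq_sym.
by move=> ckj; rewrite ckj eqxx in kj.
Qed.

Lemma stab4_inj : injective stab4.
Proof.
move=> i j eq_ij; apply: (@stab4_fix j i) => a.
by rewrite -eq_ij => /setIP[_ /astab1P].
Qed.

Lemma card_stab4 (i : 'I_4) : #|stab4 i| = 3.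
Proof.
have trA4 : [transitive A4, on setT | 'P].
  apply: (ntransitive1 (m := 2)) => //.
  by have := Alt_trans 'I_4; rewrite card_ord.
have := card_orbit_stab 'P A4 i.
rewrite (atransP trA4) ?inE // cardsT card_ord card_Alt4.
by move/eqP; rewrite -[12]/(4 * 3)%N eqn_pmul2l // => /eqP.
Qed.

(* Every subgroup of order 3 of A_4 is a point stabiliser: the four point
   stabilisers are Sylow 3-subgroups, and there are at most four of those. *)
Lemma Alt4_order3 (H : {group {perm 'I_4}}) :
  H \subset A4 -> #|H| = 3 -> exists j, H :=: stab4 j.
Proof.
move=> sHA oH.
have part3 : (12`_3)%N = 3.
  by rewrite -[12]/(3 * 4)%N partnM // part_pnat_id ?part_p'nat ?p'natE.
have Syl_stab i : stab4 i \in 'Syl_3(A4).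
  by rewrite inE pHallE subsetIl card_stab4 card_Alt4 part3.
pose X := [set stab4 i | i : 'I_4].
have sXS : X \subset 'Syl_3(A4) by apply/subsetP=> P /imsetP[i _ ->].
have oX : #|X| = 4 by rewrite card_imset ?card_ord //; apply: stab4_inj.
have oS : #|'Syl_3(A4)| = 4.
  have := card_Syl_dvd 3 A4; have := card_Syl_mod A4 (isT : prime 3).
  have := subset_leq_card sXS; rewrite oX card_Alt4.
  move: #|_| => n n_ge4 n_mod3 n_dvd12.
  have : n <= 12 by apply: dvdn_leq.
  by move: n_ge4 n_mod3 n_dvd12; do 13?[case: n => [|n] //]; case: n.
have /eqP eXS : X == 'Syl_3(A4) by rewrite eqEcard sXS oS oX.
have : H \in 'Syl_3(A4) by rewrite inE pHallE sHA oH card_Alt4 part3.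
by rewrite -eXS => /imsetP[j _ ->]; exists j.
Qed.

Lemma stab4J (i : 'I_4) a : a \in A4 -> stab4 i :^ a = stab4 (a i).
Proof. by move=> Aa; rewrite /stab4 /= conjIg conjGid // -(astab1_act 'P). Qed.

Lemma Sym4_cent_Alt4 (c : {perm 'I_4}) : c \in 'C(A4) -> c = 1.
Proof.
move=> cAc; apply/permP=> i; rewrite perm1; apply: stab4_fix => a /setIP[Aa].
move/astab1P; rewrite /= /aperm => ai.
have := congr1 (fun p : {perm 'I_4} => p i) (centP cAc a Aa).
by rewrite !permM ai.
Qed.

End Alt4.

Section Sym5.

Local Notation A5 := 'Alt_('I_5).

Lemma card_Alt5 : #|A5| = 60.
Proof. by apply: double_inj; rewrite -mul2n card_Alt card_ord. Qed.

Lemma card_Sym5 : #|[set: {perm 'I_5}]| = 120.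
Proof. by have := card_Sym 'I_5; rewrite card_ord. Qed.

(* A_5 is the only normal subgroup of order 60 in S_5, by simplicity of A_5. *)
Lemma Sym5_normal60 (H : {group {perm 'I_5}}) :
  [set: {perm 'I_5}] \subset 'N(H) -> #|H| = 60 -> H :=: A5.
Proof.
move=> nH oH.
have nHA : H :&: A5 <| A5.
  by rewrite /normal subsetIr normsI ?normG // (subset_trans _ nH) ?subsetT.
have := @simple_Alt5 'I_5; rewrite card_ord => /(_ isT) /simpleP[_ /(_ _ nHA)].
case=> [HA1 | HA].
  have := subset_leq_card (subsetT (H * A5)).
  by rewrite card_Sym5 (TI_cardMg HA1) oH card_Alt5.
apply/eqP; rewrite eq_sym eqEcard card_Alt5 oH leqnn andbT.
by rewrite -HA subsetIl.
Qed.

(* A permutation of 'I_5 commuting with the whole stabiliser of a point i0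
   is trivial: it commutes with every transposition avoiding i0. *)
Lemma Sym5_cent_stab (i0 : 'I_5) (c : {perm 'I_5}) :
  (forall p : {perm 'I_5}, p i0 = i0 -> commute c p) -> c = 1.
Proof.
move=> cc.
have fix_other y : y != i0 -> c y = y.
  move=> yi0; apply/eqP/negPn/negP => cy.
  have cz z : z != i0 -> z != y -> c y = z.
    move=> zi0 zy.
    have := cc (tperm y z); rewrite tpermD ?(eq_sym i0) // => /(_ erefl).
    move=> /(congr1 (fun p : {perm 'I_5} => p y)); rewrite !permM tpermL.
    case: (eqVneq (c y) z) => // czy; rewrite tpermD // 1?eq_sym //.
    by move/perm_inj=> eyz; rewrite eyz eqxx in zy.
  have o3 : #|~: [set i0; y]| = 3.
    have := cardsC [set i0; y]; rewrite cards2 eq_sym yi0 [in RHS]card_ord.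
    by move=> /= E; apply/eqP; move: E; lia.
  have : ~: [set i0; y] \subset [set c y].
    apply/subsetP=> z; rewrite !inE negb_or => /andP[zi0 zy].
    by rewrite (cz z zi0 zy).
  by move/subset_leq_card; rewrite o3 cards1.
apply/permP=> x; rewrite perm1.
have [->|xi0] := eqVneq x i0; last exact: fix_other.
apply/eqP/negPn/negP => ci0.
by have := fix_other _ ci0 => /perm_inj eci0; rewrite eci0 eqxx in ci0.
Qed.

End Sym5.

Section IndexedAction.

Variables (gT : finGroupType) (T : finType) (to : {action gT &-> T}).
Variables (D : {group gT}) (n : nat) (h : 'I_n.+1 -> T).
Hypothesis h_inj : injective h.
Hypothesis h_stable : forall g i, g \in D -> exists j, h j = to (h i) g.

Definition index_of (x : T) : 'I_n.+1 := odflt ord0 [pick i | h i == x].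

Lemma index_ofK (x : T) (j : 'I_n.+1) : h j = x -> h (index_of x) = x.
Proof.
rewrite /index_of; case: pickP => [i /eqP //|/(_ j)].
by rewrite -/(h j == x) => /eqP.
Qed.

Definition index_act (i : 'I_n.+1) (g : gT) : 'I_n.+1 :=
  if g \in D then index_of (to (h i) g) else i.

Lemma index_actE i g : g \in D -> h (index_act i g) = to (h i) g.
Proof.
move=> Dg; rewrite /index_act Dg; have [j hj] := h_stable i Dg.
exact: index_ofK hj.
Qed.

Lemma index_act_is_action : is_action D index_act.
Proof.
split=> [g i j | i a b Da Db].
  case Dg: (g \in D); last by rewrite /index_act Dg.
  by move=> eq_ij; apply/h_inj/(act_inj to g); rewrite -!index_actE // eq_ij.
by apply: h_inj; rewrite index_actE ?groupM // !index_actE // actM.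
Qed.

Definition index_action := Action index_act_is_action.

Definition index_perm : gT -> {perm 'I_n.+1} := actperm index_action.

Canonical index_perm_morphism := @Morphism _ _ D index_perm (actpermM index_action).

Lemma index_permE g i : g \in D -> h (index_perm g i) = to (h i) g.
Proof. by move=> Dg; rewrite actpermE /= index_actE. Qed.

End IndexedAction.

Lemma card_morph_ker (aT rT : finGroupType) (D A : {group aT})
   (f : {morphism D >-> rT}) : A \subset D -> #|A| = (#|f @* A| * #|'ker_A f|)%N.
Proof.
move=> sAD; rewrite card_morphim (setIidPr sAD) mulnC.
by rewrite -(LagrangeI A ('ker f)).
Qed.

Lemma TI_norm_cent (gT : finGroupType) (H K : {group gT}) :
  H \subset 'N(K) -> K \subset 'N(H) -> H :&: K = 1 -> H \subset 'C(K).
Proof.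
move=> nKH nHK tiHK; apply/commG1P/trivgP; rewrite -tiHK subsetI.
by rewrite commg_subl nHK commg_subr nKH.
Qed.

Lemma card2_norm_cent (gT : finGroupType) (D M : {group gT}) :
  M \subset 'N(D) -> #|D| = 2 -> M \subset 'C(D).
Proof.
move=> nDM oD; have [d Dd nd] : exists2 d, d \in D & d != 1.
  by apply/trivgPn/eqP => D1; rewrite D1 cards1 in oD.
have eD : D :=: [set 1; d].
  apply/eqP; rewrite eq_sym eqEcard cards2 eq_sym nd oD leqnn andbT.
  by rewrite subUset !sub1set group1 Dd.
apply/subsetP=> m Mm; apply/centP=> x; rewrite eD !inE => /orP[]/eqP->.
  exact: commute1.
have : d ^ m \in D by rewrite memJ_norm // (subsetP nDM).
rewrite eD !inE conjg_eq1 (negPf nd) /= => /eqP dm.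
by rewrite /commute [RHS]conjgC dm.
Qed.

(* S_5 ⊠ S_4 has order 60 * 12 + 60 * 12: it consists of the pairs of even
   permutations together with the pairs of odd ones. *)
Lemma card_boxtimes54 : #|boxtimes 5 4| = 1440.
Proof.
have -> : boxtimes 5 4 = setX 'Alt_('I_5) 'Alt_('I_4) :|: setX (~: 'Alt_('I_5)) (~: 'Alt_('I_4)).
  apply/setP=> [[p q]]; rewrite in_setU !in_setX !in_setC !Alt_even /boxtimes in_set /=.
  by case: (odd_perm p); case: (odd_perm q).
rewrite cardsU (_ : _ :&: _ = set0) ?cards0; last first.
  apply/setP=> [[p q]]; rewrite in_setI !in_setX !in_setC in_set0 /=.
  by case: (p \in 'Alt_('I_5)); rewrite ?andbF.
have oddA5 : #|~: 'Alt_('I_5)| = 60.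
  by have := cardsC 'Alt_('I_5); rewrite card_Alt5 -cardsT card_Sym5; lia.
have oddA4 : #|~: 'Alt_('I_4)| = 12.
  by have := cardsC 'Alt_('I_4); rewrite card_Alt4 -cardsT card_Sym4; lia.
by rewrite !cardsX oddA5 oddA4 card_Alt5 card_Alt4.
Qed.

Lemma boxtimes_isog (gT : finGroupType) (G : {group gT}) (n m : nat)
    (pi : {morphism G >-> {perm 'I_n}}) (rho : {morphism G >-> {perm 'I_m}}) :
    'ker pi :&: 'ker rho = 1 ->
    {in G, forall g, odd_perm (pi g) = odd_perm (rho g)} ->
    #|G| = #|boxtimes n m| ->
  G \isog boxtimes n m.
Proof.
move=> tiker parity oG.
pose phi g := (pi g, rho g).
have phiM : {in G &, {morph phi : x y / x * y}}.
  by move=> x y Gx Gy; rewrite /phi !morphM.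
pose Phi := Morphism phiM.
have injPhi : 'injm Phi.
  apply/subsetP=> x kx; have Gx : x \in G by case/setIP: kx.
  have [pix rhox] := mker kx.
  by rewrite -tiker !inE Gx pix rhox !eqxx.
suff <- : Phi @* G = boxtimes n m by apply/isogP; exists Phi.
apply/eqP; rewrite eqEcard card_injm // oG leqnn andbT.
apply/subsetP=> y /morphimP[x Gx _ ->].
by rewrite /boxtimes in_set /= parity.
Qed.

(* The amalgam lives in an ambient group: G_xy = G_x ∩ G_e, K = G_x^{[1]} is
   the core of G_xy in G_x, and t ∈ G_e \ G_xy swaps x and y, so that
   K^t = G_y^{[1]}; f is the given isomorphism K ≅ A_4. *)
Section Amalgam.

Variables (gT : finGroupType) (Gx Ge : {group gT}).

Local Notation Gxy := (Gx :&: Ge)%G.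
Local Notation K := [group of gcore Gxy Gx].
Local Notation t := (repr (Ge :\: Gxy)).

Hypothesis index5 : #|Gx : Gxy| = 5.
Hypothesis index2 : #|Ge : Gxy| = 2.
Hypothesis K_TI : K :&: K :^ t = 1.
Hypothesis quo_Sym5 : Gx / K \isog [set: {perm 'I_5}].
Variable f : {morphism K >-> {perm 'I_4}}.
Hypothesis f_inj : 'injm f.
Hypothesis f_im : f @* K = 'Alt_('I_4).

Let sGxyGx : Gxy \subset Gx := subsetIl Gx Ge.
Let sKGxy : K \subset Gxy := gcore_sub Gxy Gx.
Let sKGx : K \subset Gx := subset_trans sKGxy sGxyGx.
Let nKGx : K <| Gx := gcore_normal sGxyGx.

Lemma card_K : #|K| = 12.
Proof. by rewrite -(card_injm f_inj) // f_im card_Alt4. Qed.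

Lemma card_Gx : #|Gx| = 1440.
Proof.
have := card_isog quo_Sym5; rewrite card_Sym5 card_quotient ?normal_norm //.
by rewrite -(Lagrange sKGx) card_K => ->.
Qed.

Lemma card_Gxy : #|Gxy| = 288.
Proof. by have := Lagrange sGxyGx; rewrite index5 card_Gx; lia. Qed.

Lemma t_in : t \in Ge :\: Gxy.
Proof.
have [eGe | [x]] := set_0Vmem (Ge :\: Gxy); last exact: mem_repr.
have eGxy : Gxy :=: Ge by apply/eqP; rewrite eqEsubset subsetIr -setD_eq0 eGe eqxx.
by move: index2; rewrite eGxy indexgg.
Qed.

Definition nbr (i : 'I_5) : {set gT} := nth set0 (enum (rcosets Gxy Gx)) i.

Lemma size_nbrs : size (enum (rcosets Gxy Gx)) = 5.
Proof. by rewrite -cardE. Qed.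

Lemma nbr_inj : injective nbr.
Proof.
move=> i j /eqP; rewrite /nbr nth_uniq ?size_nbrs ?enum_uniq //.
by move/eqP/val_inj.
Qed.

Lemma nbr_onto w : w \in rcosets Gxy Gx -> exists j, nbr j = w.
Proof.
move=> wGx; have lt5 : index w (enum (rcosets Gxy Gx)) < 5.
  by rewrite -size_nbrs index_mem mem_enum.
by exists (Ordinal lt5); rewrite /nbr nth_index ?mem_enum.
Qed.

Lemma nbr_rcoset x : x \in Gx -> exists j, nbr j = Gxy :* x.
Proof. by move=> Gx_x; apply: nbr_onto; rewrite mem_rcosets mulSGid. Qed.

Lemma rcoset_nbr j : exists2 x, x \in Gx & nbr j = Gxy :* x.
Proof. by apply/rcosetsP; rewrite -mem_enum mem_nth ?size_nbrs. Qed.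

Lemma nbr_stable g i : g \in Gx -> exists j, nbr j = 'Rs%act (nbr i) g.
Proof.
move=> Gg; have [x Gx_x ->] := rcoset_nbr i.
by rewrite /= rcosetE -rcosetM; apply: nbr_rcoset; rewrite groupM.
Qed.

Definition pi : gT -> {perm 'I_5} := index_perm nbr_inj nbr_stable.

Lemma piE g i : g \in Gx -> nbr (pi g i) = nbr i :* g.
Proof. by move=> Gg; rewrite index_permE //= rcosetE. Qed.

Lemma ker_pi : 'ker pi = K.
Proof.
apply/eqP; rewrite eqEsubset; apply/andP; split; apply/subsetP=> g.
  case/setIP=> Gg /[!inE] /eqP pig1; change (pi g = 1) in pig1.
  apply/bigcapP=> x Gx_x.
  have [j nbrj] := nbr_rcoset Gx_x.
  have := piE j Gg; rewrite pig1 perm1 nbrj -rcosetM => eqGxy.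
  have : x * g * x^-1 \in Gxy.
    have <- : Gxy :* (x * g * x^-1) = Gxy.
      by rewrite rcosetM -eqGxy -rcosetM mulgV rcoset1.
    exact: rcoset_refl.
  by rewrite mem_conjg /conjg invgK mulgA.
move=> Kg; have Gg := subsetP sKGx g Kg.
rewrite !inE Gg /=; apply/eqP/permP=> j; rewrite perm1; apply: nbr_inj.
have [x Gx_x nbrj] := rcoset_nbr j; rewrite piE // nbrj.
have : g \in Gxy :^ x by move/bigcapP: Kg; apply.
rewrite mem_conjg => gx.
have -> : Gxy :* x :* g = Gxy :* (g ^ x^-1) :* x.
  by rewrite -!rcosetM /conjg invgK !mulgA mulgKV.
by rewrite rcoset_id.
Qed.

Lemma pi_stab : exists i0, forall g, g \in Gx -> (pi g i0 == i0) = (g \in Gxy).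
Proof.
have [i0 nbri0] := nbr_rcoset (group1 Gx).
rewrite mulg1 in nbri0; exists i0 => g Gg.
rewrite -(inj_eq nbr_inj) piE // nbri0; apply/eqP/idP => [<- | ?].
  exact: rcoset_refl.
exact: rcoset_id.
Qed.

(* |G_x / K| = 120, so pi maps G_x onto S_5. *)
Lemma pi_onto : pi @* Gx = setT.
Proof.
apply/eqP; rewrite eqEcard subsetT card_Sym5 card_morphim setIid ker_pi.
by have := Lagrange sKGx; rewrite card_Gx card_K; lia.
Qed.

(* The Sylow 3-subgroups of K ≅ A_4, indexed by the points of 'I_4 via f. *)
Definition syl3 (i : 'I_4) : {set gT} := f @*^-1 (stab4 i).

Lemma syl3K (i : 'I_4) : f @* syl3 i = stab4 i.
Proof. by rewrite morphpreK // f_im subsetIl. Qed.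

Lemma syl3_inj : injective syl3.
Proof. by move=> i j eq_ij; apply/stab4_inj/val_inj; rewrite /= -!syl3K eq_ij. Qed.

Lemma syl3_stable g i : g \in Gx -> exists j, syl3 j = 'Js%act (syl3 i) g.
Proof.
move=> Gg /=; have sXK : syl3 i :^ g \subset K.
  by rewrite -(normsP (normal_norm nKGx) g Gg) conjSg morphpre_sub.
have oX : #|f @* (syl3 i :^ g)| = 3.
  by rewrite card_injm // cardJg -(card_injm f_inj) ?morphpre_sub // syl3K card_stab4.
have sXA : f @* (syl3 i :^ g) \subset 'Alt_('I_4) by rewrite -f_im morphimS.
have [j eXj] := Alt4_order3 sXA oX.
by exists j; rewrite /syl3 -eXj injmK.
Qed.

Definition rho : gT -> {perm 'I_4} := index_perm syl3_inj syl3_stable.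

Lemma rhoE g i : g \in Gx -> syl3 (rho g i) = syl3 i :^ g.
Proof. exact: index_permE. Qed.

(* On K itself this action is the isomorphism f, by stab4J. *)
Lemma rho_K : {in K, rho =1 f}.
Proof.
move=> k Kk; apply/permP=> i; apply: syl3_inj; rewrite rhoE ?(subsetP sKGx) //.
have sXK : syl3 i :^ k \subset K by rewrite -(conjGid Kk) conjSg morphpre_sub.
rewrite -(injmK f_inj sXK) morphimJ ?morphpre_sub // syl3K stab4J //.
by rewrite -f_im mem_morphim.
Qed.

Lemma rho_imK : rho @* K = 'Alt_('I_4).
Proof.
by rewrite -f_im; apply: eq_in_morphim; [rewrite (setIidPr sKGx) setIid | exact: rho_K].
Qed.

Lemma ker_rho_TI : 'ker rho :&: K = 1.
Proof.
apply/trivgP/subsetP=> k /setIP[/mker rhok1 Kk]; rewrite inE.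
apply/eqP/(injmP f_inj) => //; rewrite morph1 -rho_K //.
Qed.

Lemma K_cent_TI : K :&: 'C(K) = 1.
Proof.
apply/trivgP/subsetP=> k /setIP[Kk cKk]; rewrite inE.
apply/eqP/(injmP f_inj) => //; rewrite morph1; apply: Sym4_cent_Alt4.
rewrite -f_im; apply/centP=> _ /morphimP[k' _ Kk' ->].
by rewrite /commute -!morphM // (centP cKk k').
Qed.

(* t normalises G_xy, which has index 2 in G_e. *)
Lemma Gxy_conj_t : Gxy :^ t = Gxy.
Proof.
have /setDP[Ge_t _] := t_in.
by apply: (normsP (normal_norm (index2_normal (subsetIr Gx Ge) index2))).
Qed.

Local Notation N := ('ker rho).

Let sNGx : N \subset Gx := subsetIl _ _.
Let nNGx : N <| Gx := ker_normal rho.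

(* N meets K trivially, hence is mapped injectively by pi. *)
Lemma card_pi_N : #|pi @* N| = #|N|.
Proof.
have := card_morph_ker [morphism of pi] sNGx.
by rewrite /= ker_pi ker_rho_TI cards1 muln1.
Qed.

Section RhoNotOnto.

(* Assuming that rho maps G_x onto A_4 only, we reach a contradiction. *)
Hypothesis rho_small : rho @* Gx = 'Alt_('I_4).

Lemma NK_Gx : N * K = Gx.
Proof.
apply/eqP; rewrite eqEsubset mulG_subG sNGx sKGx /=.
apply/subsetP=> x Gx_x; rewrite -morphimK // rho_imK -rho_small.
by rewrite mem_morphpre ?mem_morphim.
Qed.

Lemma card_N_Sym5 : #|N| = 120.
Proof.
apply/eqP; rewrite -(eqn_pmul2r (cardG_gt0 K)) -TI_cardMg ?ker_rho_TI //.
by rewrite NK_Gx card_Gx card_K.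
Qed.

Local Notation M := (N :&: Gxy)%G.

Lemma MK_Gxy : M * K = Gxy.
Proof. by rewrite /= setIC group_modr // NK_Gx; apply/setIidPl. Qed.

Lemma card_M : #|M| = 24.
Proof.
have MK1 : M :&: K = 1 by apply/trivgP; rewrite -ker_rho_TI setSI ?subsetIl.
apply/eqP; rewrite -(eqn_pmul2r (cardG_gt0 K)) -TI_cardMg //.
by rewrite MK_Gxy card_Gxy card_K.
Qed.

Lemma cent_K_Gxy : 'C_Gxy(K) = M.
Proof.
have cNK : N \subset 'C(K).
  apply: TI_norm_cent ker_rho_TI.
    exact: subset_trans sNGx (normal_norm nKGx).
  exact: subset_trans sKGx (normal_norm nNGx).
have sMC : M \subset 'C_Gxy(K) by rewrite subsetI subsetIr (subset_trans (subsetIl _ _)).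
have KC1 : K :&: 'C_Gxy(K) = 1.
  by apply/trivgP; rewrite -K_cent_TI setIS ?subsetIr.
have <- : M * (K :&: 'C_Gxy(K)) = 'C_Gxy(K).
  by rewrite group_modl // MK_Gxy; apply/setIidPr; apply: subsetIl.
by rewrite KC1 mulg1.
Qed.

Local Notation L := (K :^ t)%G.

Let nKGxy : K <| Gxy := normalS sKGxy sGxyGx nKGx.

Lemma L_normal : L <| Gxy.
Proof. by rewrite -[X in _ <| X]Gxy_conj_t normalJ. Qed.

(* L = G_y^{[1]} meets K trivially, so both being normal in G_xy, L
   centralises K and lies in M. *)
Lemma L_sub_M : L \subset M.
Proof.
have nLGxy := L_normal.
have cLK : L \subset 'C(K).
  apply: TI_norm_cent; last by rewrite setIC.
    exact: subset_trans (normal_sub nLGxy) (normal_norm nKGxy).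
  exact: subset_trans sKGxy (normal_norm nLGxy).
by rewrite -cent_K_Gxy subsetI normal_sub.
Qed.

Lemma card_cent_L : #|'C_Gxy(L)| = 24.
Proof.
have -> : 'C_Gxy(L) = 'C_Gxy(K) :^ t by rewrite conjIg Gxy_conj_t centJ.
by rewrite cardJg cent_K_Gxy card_M.
Qed.

Local Notation D := ('C_Gxy(L) :&: M)%G.

(* Since K <= C_Gxy(L) and K meets M trivially, D has order 24 / 12. *)
Lemma card_D : #|D| = 2.
Proof.
have sKC : K \subset 'C_Gxy(L).
  rewrite subsetI sKGxy centsC (subset_trans L_sub_M) //.
  by rewrite -cent_K_Gxy subsetIr.
have DK1 : D :&: K = 1.
  by apply/trivgP; rewrite -ker_rho_TI /= setSI // setIC -setIA subsetIl.
apply/eqP; rewrite -(eqn_pmul2r (cardG_gt0 K)) -TI_cardMg //.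
by rewrite /= group_modr // MK_Gxy (setIidPl (subsetIl _ _)) card_cent_L card_K.
Qed.

(* D is normalised by M, hence central in M. *)
Lemma D_central : M \subset 'C(D).
Proof.
apply: card2_norm_cent card_D; apply: normsI _ (normG _).
apply: subset_trans (subsetIr N Gxy) _; apply: normsI (normG _) _.
exact: norms_cent (normal_norm L_normal).
Qed.

(* pi maps D into the centre of a point stabiliser of S_5, which is trivial. *)
Lemma D_ker_pi : D \subset 'ker pi.
Proof.
have [i0 stab_i0] := pi_stab.
have piN : pi @* N = setT.
  by apply/eqP; rewrite eqEcard subsetT card_Sym5 card_pi_N card_N_Sym5.
apply/subsetP=> d Dd; have /setIP[/setIP[Gxy_d _] _] := Dd.
have Gd := subsetP sGxyGx d Gxy_d.
rewrite !inE Gd /=; apply/eqP/(Sym5_cent_stab (i0 := i0)) => p pi0.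
have /morphimP[n Gn Nn pn] : p \in pi @* N by rewrite piN inE.
rewrite {p}pn /= in pi0 *.
have Mn : n \in M by rewrite inE Nn -stab_i0 // pi0 eqxx.
by rewrite /commute -!morphM //= (centP (subsetP D_central n Mn) d Dd).
Qed.

Lemma rho_not_small : False.
Proof.
have sDK : D \subset K by rewrite (subset_trans D_ker_pi) ?ker_pi.
have sDN : D \subset N by rewrite /= setIC -setIA subsetIl.
have : D \subset N :&: K by rewrite subsetI sDN sDK.
by rewrite ker_rho_TI => /subset_leq_card; rewrite card_D cards1.
Qed.

End RhoNotOnto.

Lemma rho_onto : rho @* Gx = setT.
Proof.
have sAim : 'Alt_('I_4) \subset rho @* Gx by rewrite -rho_imK morphimS.
have [eAim | ltAim] := eqVproper sAim; first by case: rho_not_small.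
apply/eqP; rewrite eqEcard subsetT card_Sym4.
have := proper_card ltAim; have := cardSg (subsetT (rho @* Gx)).
rewrite card_Alt4 card_Sym4; move: #|_| => n /dvdnP[q def24] lt12n.
by nia.
Qed.

Lemma card_N : #|N| = 60.
Proof.
have := card_morph_ker [morphism of rho] (subxx Gx); rewrite /= (setIidPr sNGx).
by rewrite rho_onto card_Sym4 card_Gx => /eqP; rewrite -[1440]/(24 * 60)%N eqn_pmul2l // => /eqP.
Qed.

Lemma pi_N : pi @* N = 'Alt_('I_5).
Proof.
apply: Sym5_normal60; last by rewrite card_pi_N card_N.
by rewrite -pi_onto normal_norm ?morphim_normal.
Qed.

Lemma card_NK : #|N * K| = 720.
Proof. by rewrite TI_cardMg ?ker_rho_TI // card_N card_K. Qed.

Lemma preim_pi_Alt : pi @*^-1 'Alt_('I_5) = N * K.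
Proof.
apply/eqP; rewrite eq_sym eqEcard mulG_subG -sub_morphim_pre // pi_N subxx /=.
rewrite (subset_trans _ (ker_sub_pre _ _)) ?ker_pi //.
by rewrite card_morphpre ?pi_onto ?subsetT // ker_pi card_K card_Alt5 card_NK.
Qed.

Lemma preim_rho_Alt : rho @*^-1 'Alt_('I_4) = N * K.
Proof.
apply/eqP; rewrite eq_sym eqEcard mulG_subG ker_sub_pre -sub_morphim_pre //=.
rewrite rho_imK subxx card_morphpre ?rho_onto ?subsetT //.
by rewrite card_N card_Alt4 card_NK.
Qed.

Lemma parity_pi_rho : {in Gx, forall g, odd_perm (pi g) = odd_perm (rho g)}.
Proof.
move=> g Gg; apply: negb_inj; rewrite -!Alt_even.
have : (g \in pi @*^-1 'Alt_('I_5)) = (g \in rho @*^-1 'Alt_('I_4)).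
  by rewrite preim_pi_Alt preim_rho_Alt.
by rewrite !inE Gg.
Qed.

Theorem Gx_isog_boxtimes : Gx \isog boxtimes 5 4.
Proof.
apply: boxtimes_isog parity_pi_rho _; last by rewrite card_Gx card_boxtimes54.
by rewrite ker_pi setIC ker_rho_TI.
Qed.

End Amalgam.

(* Theorem 14. *)
Theorem mainTheorem14 (gT : finGroupType) (Gx Ge : {group gT}) :
  #|Gx : Gx :&: Ge| = 5%N ->
  #|Ge : Gx :&: Ge| = 2%N ->
  primitive_amalgam Gx Ge ->
  estab1 Gx Ge = 1 ->
  (Gx / vstab1 Gx Ge) \isog [set: {perm 'I_5}] ->
  vstab1 Gx Ge \isog 'Alt_('I_4) ->
  Gx \isog boxtimes 5 4.
Proof.
move=> index5 index2 _ K_TI quo_Sym5 /isogP[f f_inj f_im].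
exact: (Gx_isog_boxtimes index5 index2 K_TI quo_Sym5 (f := f) f_inj f_im).
Qed.
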